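(* Consider AdaHedge for $K$-armed bandits relying on a known upper bound $M$ on the payoffs (described in the context). For all $m\in\mathbb{R}$ with $m\le M$, all oblivious sequences $y_1,y_2,\dots$ in $[m,M]^K$ and all $T\ge1$, \[ R_T(y_{1:T})\le 2(M-m)\sqrt{KT\ln K}+2(M-m). \]
   Context: Oblivious adversarial $K$-armed bandits ($K\ge2$): reward vectors $y_t\in[m,M]^K$ fixed beforehand; at round $t$ the player draws $A_t\sim p_t$ and observes only $y_{t,A_t}$; $R_T(y_{1:T})=\max_a\sum_{t=1}^Ty_{t,a}-\mathbb{E}[\sum_{t=1}^Ty_{t,A_t}]$. The player knows $M$ but not $m$. Algorithm (input $M$): $\eta_1=+\infty$, $p_1=(1/K,\dots,1/K)$. For $t\ge1$: draw $A_t\sim p_t$; observe $y_{t,A_t}$; set $\widehat y_{t,a}=\frac{y_{t,a}-M}{p_{t,a}}\mathbf{1}\{A_t=a\}+M$ for all $a$; compute $\delta_t=-\sum_a p_{t,a}\widehat y_{t,a}+\frac1{\eta_t}\ln(\sum_a p_{t,a}e^{\eta_t\widehat y_{t,a}})$ if $\eta_t<\infty$ and $\delta_t=-\sum_a p_{t,a}\widehat y_{t,a}+\max_a\widehat y_{t,a}$ if $\eta_t=\infty$; set $\eta_{t+1}=\ln K/\sum_{s=1}^t\delta_s$; set $p_{t+1,a}=\exp(\eta_{t+1}\sum_{s=1}^t\widehat y_{s,a})/\sum_{k=1}^K\exp(\eta_{t+1}\sum_{s=1}^t\widehat y_{s,k})$. No mixing with the uniform distribution is used. *)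

From HB Require Import structures.
From mathcomp Require Import all_boot all_order all_algebra.
From mathcomp Require Import all_classical all_reals all_analysis.
Set Implicit Arguments. Unset Strict Implicit. Unset Printing Implicit Defensive.
Import Order.TTheory GRing.Theory Num.Theory.
Local Open Scope ring_scope.

Section AdaHedgeBandit.
Variables (R : realType) (K : nat).

(* State of the algorithm before a round: cumulative estimated rewards
   Lhat a = sum_{s<t} yhat_{s,a}, and cumulative mixability gaps
   D = sum_{s<t} delta_s.  The learning rate is eta_t = ln K / D,
   with the convention eta = +infty when D = 0 (in particular eta_1 = +infty). *)
Definition state := (('I_K -> R) * R)%type.

Definition init_state : state := (fun _ => 0, 0).

Definition expw (eta : R) (L : 'I_K -> R) (a : 'I_K) : R :=
  expR (eta * L a) / \sum_(k < K) expR (eta * L k).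

(* Limit eta -> +infty of exponential weights: uniform on the argmax set. *)
Definition argmax_set (L : 'I_K -> R) : {set 'I_K} :=
  [set a | [forall b, L b <= L a]].
Definition unif_argmax (L : 'I_K -> R) (a : 'I_K) : R :=
  (a \in argmax_set L)%:R / #|argmax_set L|%:R.

Definition eta_of (D : R) : R := ln K%:R / D.

Definition prob (st : state) : 'I_K -> R :=
  if st.2 == 0 then unif_argmax st.1 else expw (eta_of st.2) st.1.

Definition yhat (M : R) (p : 'I_K -> R) (yt : 'I_K -> R) (a b : 'I_K) : R :=
  (yt b - M) / p b * (a == b)%:R + M.

Definition delta (D : R) (p : 'I_K -> R) (yh : 'I_K -> R) (a : 'I_K) : R :=
  if D == 0 then
    - (\sum_(b < K) p b * yh b) + \big[Num.max/yh a]_(b < K) yh b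
  else
    - (\sum_(b < K) p b * yh b)
    + (eta_of D)^-1 * ln (\sum_(b < K) p b * expR (eta_of D * yh b)).

Definition step (M : R) (yt : 'I_K -> R) (st : state) (a : 'I_K) : state :=
  let p := prob st in
  let yh := yhat M p yt a in
  (fun b => st.1 b + yh b, st.2 + delta st.2 p yh a).

(* Expected cumulative reward of the algorithm over n rounds starting at
   (0-based) round t from state st, for the oblivious sequence y. *)
Fixpoint exp_reward (M : R) (y : nat -> 'I_K -> R) (n t : nat) (st : state)
  : R :=
  match n with
  | 0 => 0
  | n'.+1 => \sum_(a < K) prob st a *
               (y t a + exp_reward M y n' t.+1 (step M (y t) st a))
  end.

(* Regret R_T(y_{1:T}) = max_a sum_{t<T} y_t,a - E[sum_{t<T} y_{t,A_t}]
   (round t+1 of the paper is index t here). *)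
(* Maximum of a (nonempty, since K >= 2) list of reals. *)
Definition maxlist (s : seq R) : R := \big[Num.max/head 0 s]_(x <- s) x.

Definition regret (M : R) (y : nat -> 'I_K -> R) (T : nat) : R :=
  maxlist [seq \sum_(t < T) y t a | a <- enum 'I_K]
  - exp_reward M y T 0 init_state.

End AdaHedgeBandit.

(* Write Delta_t for the cumulative mixability gap and Psi_t for the
   exponential-weights potential (1/eta_t) ln((1/K) sum_a exp(eta_t Lhat_{t,a})),
   read as max_a Lhat_{t,a} while eta_t = +oo.  Since eta_t only decreases and
   Psi is nondecreasing in eta, one round raises Psi by at most
   delta_t + <p_t, yhat_t> = delta_t + y_{t,A_t}; and Psi_t >= Lhat_{t,a} - Delta_t
   because eta_t Delta_t = ln K.  As E[Lhat_{T,a}] >= sum_t y_{t,a}, the regret is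
   at most 2 E[Delta_T].  Each delta_t lies in [0, M - m] and is at most eta_t/2
   times the second moment sum_b p_{t,b} (yhat_{t,b} - M)^2, whose expectation is at
   most K (M - m)^2; hence (Delta_t - (M - m)/2)^2 grows in expectation by at most
   K (M - m)^2 ln K per round, and AM-GM turns this into
   E[Delta_T] <= (M - m) sqrt(K T ln K) + (M - m). *)

From HB Require Import structures.
From mathcomp Require Import all_boot all_order all_algebra.
From mathcomp Require Import all_classical all_reals all_analysis.
From mathcomp Require Import ring lra.
Import Order.TTheory GRing.Theory Num.Theory numFieldNormedType.Exports.
Local Open Scope ring_scope.
Set Implicit Arguments. Unset Strict Implicit. Unset Printing Implicit Defensive.


Lemma expR_ge_cubic (R : realType) (x : R) : 0 <= x ->
  1 + x + x ^+ 2 / 2 + x ^+ 3 / 6 <= expR x.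
Proof.
move=> x_ge0; rewrite /expR.
pose f (i : nat) := exp_coeff x i * (i < 4)%:R.
have sum_f n : (3 < n)%N -> \sum_(0 <= i < n) f i = 1 + x + x ^+ 2 / 2 + x ^+ 3 / 6.
  move=> n_gt3; rewrite (@big_cat_nat _ _ _ 4) //= [X in _ + X]big1_seq ?addr0; last first.
    by move=> i /andP[_]; rewrite mem_index_iota => /andP[i4 _]; rewrite /f ltnNge i4 mulr0.
  rewrite !big_nat_recr //= big_nil /f /= !mulr1 add0r !exp_coeffE /=.
  by rewrite !factS fact0 /= expr0 expr1 invr1 mulr1 mul1r ![_^-1 * _]mulrC.
rewrite [leLHS](_ : _ = limn (series f)); last first.
  by apply/esym/(@lim_near_cst R^o) => //; near=> n; apply: sum_f; near: n.
apply: ler_lim; first by apply: is_cvg_near_cst; near=> n; apply: sum_f; near: n.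
  exact: is_cvg_series_exp_coeff.
near=> n; apply: ler_sum => i _; rewrite /f.
case: (i < 4)%N; first by rewrite mulr1.
by rewrite mulr0 exp_coeffE /= mulr_ge0 ?invr_ge0 ?exprn_ge0.
Unshelve. all: by end_near. Qed.

Lemma expR_le_quad (R : realType) (x : R) : x <= 0 -> expR x <= 1 + x + x ^+ 2 / 2.
Proof.
move=> x_le0; set y := - x; have y_ge0 : 0 <= y by rewrite oppr_ge0.
set q := 1 + x + x ^+ 2 / 2; set c := 1 + y + y ^+ 2 / 2 + y ^+ 3 / 6.
have q_ge0 : 0 <= q.
  have -> : q = ((x + 1) ^+ 2 + 1) / 2 by rewrite /q; field.
  by rewrite divr_ge0 ?addr_ge0 ?sqr_ge0.
have qc_ge1 : 1 <= q * c.
  have -> : q * c = 1 + (y ^+ 3 / 6 + y ^+ 4 / 12 + y ^+ 5 / 12) by rewrite /q /c /y; field.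
  by rewrite lerDl !addr_ge0 ?divr_ge0 ?exprn_ge0.
apply: (@le_trans _ _ (expR x * (q * c))); first by rewrite ler_peMr ?expR_ge0.
rewrite mulrCA -[leRHS]mulr1 -(expRxMexpNx_1 x) -/y.
by apply: ler_wpM2l => //; apply: ler_wpM2l; [exact: expR_ge0 | exact: expR_ge_cubic].
Qed.

Lemma ln_le_subr1 (R : realType) (x : R) : 0 < x -> ln x <= x - 1.
Proof. by move=> x_gt0; have := @le_ln1Dx R (x - 1); rewrite [1 + _]addrC subrK; apply; lra. Qed.

Lemma le_amgm (R : realFieldType) (u c : R) : 0 < c -> u <= u ^+ 2 / (2 * c) + c / 2.
Proof.
move=> c_gt0; have -> : u ^+ 2 / (2 * c) + c / 2 = u + (u - c) ^+ 2 / (2 * c).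
  by field; rewrite gt_eqF.
by rewrite lerDl divr_ge0 ?sqr_ge0 // mulr_ge0 // ltW.
Qed.

Lemma le_inf_amgm (R : realFieldType) (x a : R) : 0 <= a ->
  (forall c, 0 < c -> x <= a ^+ 2 / (2 * c) + c / 2) -> x <= a.
Proof.
move=> a_ge0; have [->|a_neq0] := eqVneq a 0 => amgm.
  apply/ler_addgt0Pr => e e_gt0; have e2_gt0 : 0 < 2 * e by rewrite mulr_gt0.
  apply: le_trans (amgm _ e2_gt0) _.
  by rewrite expr0n /= mul0r !add0r [2 * e]mulrC mulfK ?pnatr_eq0.
have a_gt0 : 0 < a by rewrite lt_def a_neq0.
have := amgm a a_gt0; have -> // : a ^+ 2 / (2 * a) + a / 2 = a.
by field; rewrite gt_eqF.
Qed.

Lemma sum_mul_indicator (R : nzRingType) (I : finType) (F : I -> R) a :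
  \sum_b F b * (b == a)%:R = F a.
Proof.
rewrite (bigD1 a) //= eqxx mulr1 big1 ?addr0 // => b.
by move=> /negbTE ->; rewrite mulr0.
Qed.

Definition mix (R : realType) (I : finType) (eta : R) (p z : I -> R) : R :=
  eta^-1 * ln (\sum_b p b * expR (eta * z b)).

Section MixOfDistribution.
Variables (R : realType) (I : finType) (p : I -> R).
Hypotheses (p_ge0 : forall b, 0 <= p b) (p_sum1 : \sum_b p b = 1).

Lemma mean_le (z : I -> R) x : (forall b, z b <= x) -> \sum_b p b * z b <= x.
Proof.
move=> z_le; rewrite -[leRHS]mul1r -p_sum1 mulr_suml.
by apply: ler_sum => b _; rewrite ler_wpM2l.
Qed.

Lemma expR_mean_le (z : I -> R) : expR (\sum_b p b * z b) <= \sum_b p b * expR (z b).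
Proof.
set c := \sum_b p b * z b.
have tangent b : expR c + expR c * (z b - c) <= expR (z b).
  have -> : expR (z b) = expR c * expR (z b - c) by rewrite -expRD addrC subrK.
  by rewrite -[X in X + _]mulr1 -mulrDr ler_pM2l ?expR_gt0 // expR_ge1Dx.
apply: le_trans (ler_sum _ (fun b _ => ler_wpM2l (p_ge0 b) (tangent b))).
rewrite (eq_bigr (fun b => expR c * p b + expR c * (p b * z b) - expR c * c * p b)); last first.
  by move=> b _; ring.
by rewrite sumrB big_split /= -!mulr_sumr p_sum1 -/c !mulr1 addrK.
Qed.

Lemma sum_pexpR_gt0 (z : I -> R) : 0 < \sum_b p b * expR (z b).
Proof. exact: lt_le_trans (expR_gt0 _) (expR_mean_le z). Qed.

Lemma mix_le eta z x : 0 < eta ->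
  (mix eta p z <= x) = (\sum_b p b * expR (eta * z b) <= expR (eta * x)).
Proof.
move=> eta_gt0; rewrite /mix -(ler_pM2l eta_gt0) mulrA mulfV ?gt_eqF // mul1r.
by rewrite -ler_expR lnK // posrE sum_pexpR_gt0.
Qed.

Lemma ge_mix eta z x : 0 < eta ->
  (x <= mix eta p z) = (expR (eta * x) <= \sum_b p b * expR (eta * z b)).
Proof.
move=> eta_gt0; rewrite /mix -(ler_pM2l eta_gt0) mulrA mulfV ?gt_eqF // mul1r.
by rewrite -[_ * x <= _]ler_expR lnK // posrE sum_pexpR_gt0.
Qed.

Lemma mean_le_mix eta z : 0 < eta -> \sum_b p b * z b <= mix eta p z.
Proof.
move=> eta_gt0; rewrite ge_mix // mulr_sumr.
under eq_bigr do rewrite mulrCA.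
exact: expR_mean_le.
Qed.

Lemma mix_le_max eta z x : 0 < eta -> (forall b, z b <= x) -> mix eta p z <= x.
Proof.
by move=> eta_gt0 z_le; rewrite mix_le //; apply: mean_le => b; rewrite ler_expR ler_pM2l.
Qed.

Lemma mix_le_mean_var eta z x : 0 < eta -> (forall b, z b <= x) ->
  mix eta p z <= \sum_b p b * z b + eta / 2 * \sum_b p b * (z b - x) ^+ 2.
Proof.
move=> eta_gt0 z_le; rewrite mix_le //.
set c := \sum_b p b * z b; set V := \sum_b p b * (z b - x) ^+ 2.
set u := eta * (c - x) + eta ^+ 2 / 2 * V.
have taylor b : expR (eta * z b) <=
    expR (eta * x) * (1 + eta * (z b - x) + (eta * (z b - x)) ^+ 2 / 2).
  rewrite (_ : eta * z b = eta * x + eta * (z b - x)); last by ring.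
  rewrite expRD; apply: ler_wpM2l; first exact: expR_ge0.
  by apply: expR_le_quad; apply: mulr_ge0_le0; [exact: ltW | rewrite subr_le0].
apply: le_trans (ler_sum _ (fun b _ => ler_wpM2l (p_ge0 b) (taylor b))) _.
have -> : \sum_b p b * (expR (eta * x) *
    (1 + eta * (z b - x) + (eta * (z b - x)) ^+ 2 / 2)) = expR (eta * x) * (1 + u).
  rewrite (eq_bigr (fun b => expR (eta * x) * (p b + eta * (p b * z b) - eta * x * p b
      + eta ^+ 2 / 2 * (p b * (z b - x) ^+ 2)))); last by move=> b _; ring.
  rewrite -mulr_sumr big_split sumrB big_split /= -!mulr_sumr p_sum1 /u -/c -/V.
  by rewrite mulr1 mulrBr !addrA.
rewrite [X in _ <= expR X](_ : _ = eta * x + u); last by rewrite /u /c /V; ring.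
by rewrite expRD ler_pM2l ?expR_gt0 // expR_ge1Dx.
Qed.

End MixOfDistribution.

Section LogSumExp.
Variables (R : realType) (K : nat).
Hypothesis K_gt0 : (0 < K)%N.

Lemma sum_ord_gt0 (F : 'I_K -> R) : (forall b, 0 < F b) -> 0 < \sum_b F b.
Proof.
move=> F_gt0; pose a0 := Ordinal K_gt0.
rewrite (bigD1 a0) //= ltr_pwDl ?F_gt0 //.
by apply: sumr_ge0 => i _; exact: ltW.
Qed.

Lemma expw_gt0 (eta : R) (L : 'I_K -> R) a : 0 < expw eta L a.
Proof. by rewrite divr_gt0 ?expR_gt0 // sum_ord_gt0 // => b; exact: expR_gt0. Qed.

Lemma expw_sum1 (eta : R) (L : 'I_K -> R) : \sum_a expw eta L a = 1.
Proof. by rewrite -mulr_suml mulfV // gt_eqF // sum_ord_gt0 // => b; exact: expR_gt0. Qed.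

Definition lse (eta : R) (L : 'I_K -> R) : R :=
  eta^-1 * ln ((\sum_b expR (eta * L b)) / K%:R).

Definition kl_unif (q : 'I_K -> R) : R := \sum_b q b * ln (K%:R * q b).

Lemma sum_expR_div_gt0 (z : 'I_K -> R) : 0 < (\sum_b expR (z b)) / K%:R.
Proof. by rewrite divr_gt0 ?ltr0n // sum_ord_gt0 // => b; exact: expR_gt0. Qed.

Lemma lse_le eta L x : 0 < eta ->
  (lse eta L <= x) = ((\sum_b expR (eta * L b)) / K%:R <= expR (eta * x)).
Proof.
move=> eta_gt0; rewrite /lse -(ler_pM2l eta_gt0) mulrA mulfV ?gt_eqF // mul1r.
by rewrite -[_ <= _ * x]ler_expR lnK // posrE sum_expR_div_gt0.
Qed.

Lemma ge_lse eta L x : 0 < eta ->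
  (x <= lse eta L) = (expR (eta * x) <= (\sum_b expR (eta * L b)) / K%:R).
Proof.
move=> eta_gt0; rewrite /lse -(ler_pM2l eta_gt0) mulrA mulfV ?gt_eqF // mul1r.
by rewrite -[_ * x <= _]ler_expR lnK // posrE sum_expR_div_gt0.
Qed.

Lemma gibbs_variational (q z : 'I_K -> R) : (forall b, 0 < q b) -> \sum_b q b = 1 ->
  \sum_b q b * z b - kl_unif q <= ln ((\sum_b expR (z b)) / K%:R).
Proof.
move=> q_gt0 q_sum1; set S := (\sum_b expR (z b)) / K%:R.
have S_gt0 : 0 < S := sum_expR_div_gt0 z.
have term b : q b * z b - q b * ln (K%:R * q b) <=
              q b * ln S + (expR (z b) / K%:R / S - q b).
  set w := expR (z b) / (K%:R * q b * S).
  have Kq_gt0 : 0 < K%:R * q b by rewrite mulr_gt0 ?ltr0n.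
  have ln_w : ln w = z b - ln (K%:R * q b) - ln S.
    rewrite ln_div ?posrE ?expR_gt0 ?(mulr_gt0 Kq_gt0 S_gt0) //.
    by rewrite lnM ?posrE // expRK opprD addrA.
  have qw : q b * (w - 1) = expR (z b) / K%:R / S - q b.
    by rewrite /w; field; rewrite !gt_eqF ?ltr0n.
  have := ln_le_subr1 (divr_gt0 (expR_gt0 (z b)) (mulr_gt0 Kq_gt0 S_gt0)).
  rewrite -/w ln_w -qw -mulrDr -mulrBr => ln_le.
  by apply: ler_wpM2l; [exact: ltW | lra].
rewrite /kl_unif -sumrB; apply: le_trans (ler_sum _ (fun b _ => term b)) _.
rewrite big_split /= -mulr_suml q_sum1 mul1r sumrB -!mulr_suml q_sum1.
by rewrite -/S mulfV ?gt_eqF // subrr addr0.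
Qed.

Lemma kl_unif_ge0 (q : 'I_K -> R) : (forall b, 0 < q b) -> \sum_b q b = 1 ->
  0 <= kl_unif q.
Proof.
move=> q_gt0 q_sum1; have := gibbs_variational (fun=> 0) q_gt0 q_sum1.
rewrite big1 => [|b _]; last exact: mulr0.
rewrite (eq_bigr (fun=> 1)) => [|b _]; last exact: expR0.
by rewrite sumr_const card_ord mulfV ?pnatr_eq0 -?lt0n // ln1 sub0r oppr_le0.
Qed.

Lemma lse_expw eta L : 0 < eta ->
  lse eta L = \sum_b expw eta L b * L b - kl_unif (expw eta L) / eta.
Proof.
move=> eta_gt0; set q := expw eta L; set Z := \sum_k expR (eta * L k).
have Z_gt0 : 0 < Z by apply: sum_ord_gt0 => b; exact: expR_gt0.
have ln_Kq b : ln (K%:R * q b) = eta * L b - ln (Z / K%:R).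
  rewrite lnM ?posrE ?ltr0n ?expw_gt0 // /q /expw -/Z.
  by rewrite !ln_div ?posrE ?expR_gt0 ?ltr0n // expRK; ring.
have kl : kl_unif q = eta * \sum_b q b * L b - ln (Z / K%:R).
  rewrite /kl_unif (eq_bigr (fun b => eta * (q b * L b) - ln (Z / K%:R) * q b)); last first.
    by move=> b _; rewrite ln_Kq; ring.
  by rewrite sumrB -!mulr_sumr expw_sum1 mulr1.
by rewrite kl /lse -/Z; field; rewrite gt_eqF.
Qed.

(* Exponential weights maximise [<q, L> - kl_unif q / eta] over distributions,
   and the relative entropy term shrinks as [eta] grows. *)
Lemma lse_homo e1 e2 L : 0 < e1 -> e1 <= e2 -> lse e1 L <= lse e2 L.
Proof.
move=> e1_gt0 e12; have e2_gt0 := lt_le_trans e1_gt0 e12.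
set q := expw e1 L.
have kl_ge0 : 0 <= kl_unif q := kl_unif_ge0 (@expw_gt0 e1 L) (expw_sum1 e1 L).
have lse2 : \sum_b q b * L b - kl_unif q / e2 <= lse e2 L.
  rewrite -(ler_pM2l e2_gt0) [leRHS]mulrA mulfV ?gt_eqF // mul1r.
  rewrite mulrBr mulrCA mulfV ?gt_eqF // mulr1 mulr_sumr.
  under eq_bigr do rewrite mulrCA.
  exact: gibbs_variational (@expw_gt0 e1 L) (expw_sum1 e1 L).
rewrite lse_expw // -/q; apply: le_trans lse2; rewrite lerD2l lerN2.
by apply: ler_wpM2l => //; rewrite lef_pV2 ?posrE.
Qed.

Lemma lse_ge eta L c : 0 < eta -> L c - ln K%:R / eta <= lse eta L.
Proof.
move=> eta_gt0; rewrite ge_lse // mulrBr mulrCA mulfV ?gt_eqF // mulr1.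
rewrite expRB lnK ?posrE ?ltr0n // ler_pM2r ?invr_gt0 ?ltr0n //.
by rewrite (bigD1 c) //= lerDl sumr_ge0 // => b _; exact: expR_ge0.
Qed.

Lemma lse_le_max eta L x : 0 < eta -> (forall b, L b <= x) -> lse eta L <= x.
Proof.
move=> eta_gt0 L_le; rewrite lse_le // ler_pdivrMr ?ltr0n //.
have exp_le b : expR (eta * L b) <= expR (eta * x) by rewrite ler_expR ler_pM2l.
apply: le_trans (ler_sum _ (fun b _ => exp_le b)) _.
by rewrite sumr_const card_ord mulr_natr.
Qed.

Lemma lse_shift eta L z : 0 < eta ->
  lse eta (fun b => L b + z b) = lse eta L + mix eta (expw eta L) z.
Proof.
move=> eta_gt0; set Z := \sum_k expR (eta * L k).
have Z_gt0 : 0 < Z by apply: sum_ord_gt0 => b; exact: expR_gt0.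
have q_ge0 b : 0 <= expw eta L b by exact/ltW/expw_gt0.
rewrite /lse /mix /=.
have -> : \sum_b expR (eta * (L b + z b)) = Z * \sum_b expw eta L b * expR (eta * z b).
  rewrite mulr_sumr; apply: eq_bigr => b _.
  by rewrite /expw -/Z mulrDr expRD; field; rewrite gt_eqF.
have S_gt0 := sum_pexpR_gt0 q_ge0 (expw_sum1 eta L) (fun b => eta * z b).
have ZK_gt0 : 0 < Z / K%:R by rewrite divr_gt0 ?ltr0n.
by rewrite mulrAC (@lnM _ (Z / K%:R)) ?posrE // mulrDr.
Qed.

End LogSumExp.

Section AdaHedgeRound.
Variables (R : realType) (K : nat) (M : R).
Hypothesis HK : (1 < K)%N.
Let K_gt0 : (0 < K)%N := ltnW HK.
Let a0 : 'I_K := Ordinal K_gt0.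

Lemma lnK_gt0 : 0 < ln (K%:R : R).
Proof. by rewrite ln_gt0 // ltr1n. Qed.

Lemma eta_of_gt0 (D : R) : 0 < D -> 0 < eta_of K D.
Proof. by move=> D_gt0; rewrite divr_gt0 // lnK_gt0. Qed.

Lemma eta_ofM (D : R) : 0 < D -> eta_of K D * D = ln K%:R.
Proof. by move=> D_gt0; rewrite /eta_of mulfVK // gt_eqF. Qed.

Lemma eta_of_le (D D' : R) : 0 < D -> D <= D' -> eta_of K D' <= eta_of K D.
Proof.
move=> D_gt0 DD'; apply: ler_wpM2l; first exact/ltW/lnK_gt0.
by rewrite lef_pV2 ?posrE // (lt_le_trans D_gt0).
Qed.

Lemma argmax_set_card_gt0 (L : 'I_K -> R) : (0 < #|argmax_set L|)%N.
Proof.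
case: (@arg_maxP _ _ _ a0 xpredT L isT) => i _ i_max.
by apply/card_gt0P; exists i; rewrite inE; apply/forallP => b; exact: i_max.
Qed.

Lemma prob_ge0 (st : state R K) a : 0 <= prob st a.
Proof.
rewrite /prob; case: ifP => _; first by rewrite /unif_argmax divr_ge0.
exact/ltW/expw_gt0.
Qed.

Lemma prob_sum1 (st : state R K) : \sum_a prob st a = 1.
Proof.
rewrite /prob; case: ifP => _; last exact: expw_sum1.
set A := argmax_set st.1; rewrite /unif_argmax -/A -mulr_suml.
have -> : \sum_a (a \in A)%:R = \sum_(a in A) (1 : R).
  by rewrite [RHS]big_mkcond; apply: eq_bigr => a _; case: (a \in A).
by rewrite sumr_const mulfV // pnatr_eq0 -lt0n argmax_set_card_gt0.
Qed.

Definition maxL (L : 'I_K -> R) : R := \big[Num.max/L a0]_b L b.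

Definition pot (st : state R K) : R :=
  if st.2 == 0 then maxL st.1 else lse (eta_of K st.2) st.1.

Lemma maxL_ge (L : 'I_K -> R) c : L c <= maxL L.
Proof. exact: le_bigmax. Qed.

Lemma maxL_le (L : 'I_K -> R) x : (forall c, L c <= x) -> maxL L <= x.
Proof. by move=> L_le; apply: bigmax_le. Qed.

Lemma pot_init : pot (init_state R K) = 0.
Proof. by rewrite /pot eqxx; apply/le_anti; rewrite maxL_le ?(maxL_ge (fun=> 0) a0). Qed.

Lemma pot_ge (st : state R K) c : 0 <= st.2 -> st.1 c - st.2 <= pot st.
Proof.
rewrite /pot => D_ge0; case: ifPn => [/eqP ->|D_neq0]; first by rewrite subr0 maxL_ge.
have D_gt0 : 0 < st.2 by rewrite lt0r D_neq0.
have := lse_ge K_gt0 st.1 c (eta_of_gt0 D_gt0).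
by rewrite -(eta_ofM D_gt0) mulrAC mulfV ?gt_eqF ?eta_of_gt0 // mul1r.
Qed.

Lemma pot_le_maxL (st : state R K) : 0 <= st.2 -> pot st <= maxL st.1.
Proof.
rewrite /pot => D_ge0; case: ifPn => // D_neq0.
apply: lse_le_max K_gt0 _ _ _ _ (maxL_ge st.1).
by apply: eta_of_gt0; rewrite lt0r D_neq0.
Qed.

Lemma delta_max (D : R) p (z : 'I_K -> R) a : D = 0 ->
  delta D p z a = \big[Num.max/z a]_b z b - \sum_b p b * z b.
Proof. by move=> ->; rewrite /delta eqxx addrC. Qed.

Lemma delta_mix (D : R) p (z : 'I_K -> R) a : D != 0 ->
  delta D p z a = mix (eta_of K D) p z - \sum_b p b * z b.
Proof. by move=> D_neq0; rewrite /delta (negbTE D_neq0) addrC. Qed.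

Section OneRound.
Variables (st : state R K) (yt : 'I_K -> R) (m : R).
Hypotheses (D_ge0 : 0 <= st.2) (yt_le : forall b, yt b <= M) (yt_ge : forall b, m <= yt b).

Local Notation p := (prob st).
Local Notation yh a := (yhat M (prob st) yt a).
Let p_ge0 := prob_ge0 st.
Let p_sum1 := prob_sum1 st.

Let gap_gt0 : st.2 != 0 -> 0 < st.2.
Proof. by move=> D_neq0; rewrite lt0r D_neq0. Qed.

Let eta_gt0 : st.2 != 0 -> 0 < eta_of K st.2.
Proof. by move/gap_gt0/eta_of_gt0. Qed.

Lemma yhat_le a b : yh a b <= M.
Proof.
rewrite /yhat gerDr; apply: mulr_le0_ge0 => //.
by apply: mulr_le0_ge0; rewrite ?subr_le0 ?invr_ge0.
Qed.

Lemma mean_yhat a : p a != 0 -> \sum_b p b * yh a b = yt a.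
Proof.
move=> pa_neq0; rewrite /yhat.
rewrite (eq_bigr (fun b => p b * ((yt b - M) / p b) * (b == a)%:R + p b * M)); last first.
  by move=> b _; rewrite eq_sym; ring.
rewrite big_split /= sum_mul_indicator -mulr_suml p_sum1 mul1r.
by rewrite mulrCA mulfV // mulr1 subrK.
Qed.

(* Equality fails only when [p c = 0]: then [yhat _ c] is the constant [M],
   since division by zero yields [0]. *)
Lemma yt_le_mean_yhat c : yt c <= \sum_a p a * yh a c.
Proof.
rewrite /yhat (eq_bigr (fun a => p a * ((yt c - M) / p c) * (a == c)%:R + p a * M)); last first.
  by move=> a _; ring.
rewrite big_split /= sum_mul_indicator -mulr_suml p_sum1 mul1r.
have [->|pc_neq0] := eqVneq (p c) 0; last by rewrite mulrCA mulfV // mulr1 subrK.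
by rewrite mul0r add0r.
Qed.

Lemma delta_ge0 a : 0 <= delta st.2 p (yh a) a.
Proof.
have [D0|D_neq0] := eqVneq st.2 0.
  rewrite delta_max // subr_ge0; apply: mean_le p_ge0 p_sum1 _ _ _ => b.
  exact: le_bigmax.
by rewrite delta_mix // subr_ge0 mean_le_mix ?eta_gt0.
Qed.

Lemma delta_le a : p a != 0 -> delta st.2 p (yh a) a <= M - yt a.
Proof.
move=> pa_neq0; have [D0|D_neq0] := eqVneq st.2 0.
  rewrite delta_max // mean_yhat // lerD2r.
  by apply: bigmax_le => [|b _]; exact: yhat_le.
by rewrite delta_mix // mean_yhat // lerD2r mix_le_max ?eta_gt0 // => b; exact: yhat_le.
Qed.

Lemma delta_le_var a : st.2 != 0 ->
  delta st.2 p (yh a) a <= eta_of K st.2 / 2 * \sum_b p b * (yh a b - M) ^+ 2.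
Proof.
move=> D_neq0; rewrite delta_mix // lerBlDl mix_le_mean_var ?eta_gt0 // => b.
exact: yhat_le.
Qed.

Lemma pot_step a :
  pot (step M yt st a) <= pot st + (delta st.2 p (yh a) a + \sum_b p b * yh a b).
Proof.
set st' := step M yt st a.
have D'_ge0 : 0 <= st'.2 by rewrite addr_ge0 // delta_ge0.
have [D0|D_neq0] := eqVneq st.2 0.
  rewrite delta_max // subrK /pot D0 eqxx.
  apply: le_trans (pot_le_maxL D'_ge0) _; apply: maxL_le => c /=.
  by rewrite lerD ?maxL_ge ?le_bigmax.
have D_gt0 := gap_gt0 D_neq0.
have D'_gt0 : 0 < st'.2 by rewrite ltr_wpDr // delta_ge0.
have p_expw : p = expw (eta_of K st.2) st.1 by rewrite /prob (negbTE D_neq0).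
rewrite delta_mix // subrK /pot (negbTE D_neq0) (negbTE (lt0r_neq0 D'_gt0)).
apply: le_trans (lse_homo K_gt0 _ (eta_of_gt0 D'_gt0) (eta_of_le D_gt0 _)) _.
  by rewrite lerDl delta_ge0.
by rewrite lse_shift ?eta_gt0 // -p_expw.
Qed.

Lemma gap_sq_step a : p a != 0 ->
  (st.2 + delta st.2 p (yh a) a - (M - m) / 2) ^+ 2 <=
  (st.2 - (M - m) / 2) ^+ 2 + ln K%:R * \sum_b p b * (yh a b - M) ^+ 2.
Proof.
move=> pa_neq0; set d := delta _ _ _ _; set V := \sum_b _.
have d_ge0 : 0 <= d := delta_ge0 a.
have d_le : d <= M - m by apply: le_trans (delta_le pa_neq0) _; rewrite lerD2l lerN2.
have Dd_le : st.2 * d <= ln K%:R * V / 2.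
  have [->|D_neq0] := eqVneq st.2 0.
    rewrite mul0r divr_ge0 // mulr_ge0 ?(ltW lnK_gt0) // sumr_ge0 // => b _.
    by rewrite mulr_ge0 ?sqr_ge0.
  rewrite -(eta_ofM (gap_gt0 D_neq0)).
  apply: le_trans (ler_wpM2l D_ge0 (delta_le_var a D_neq0)) _.
  have -> // : st.2 * (eta_of K st.2 / 2 * V) = eta_of K st.2 * st.2 * V / 2 by field.
have : d * (d - (M - m)) <= 0 by rewrite mulr_ge0_le0 // subr_le0.
have -> : (st.2 + d - (M - m) / 2) ^+ 2 =
    (st.2 - (M - m) / 2) ^+ 2 + 2 * (st.2 * d) + d * (d - (M - m)) by field.
lra.
Qed.

Lemma sum_prob_var_le :
  \sum_a p a * \sum_b p b * (yh a b - M) ^+ 2 <= K%:R * (M - m) ^+ 2.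
Proof.
apply: (@le_trans _ _ (\sum_(a < K) (M - m) ^+ 2)); last first.
  by rewrite sumr_const card_ord mulr_natl.
apply: ler_sum => a _.
rewrite /yhat (eq_bigr (fun b => p b * ((yt b - M) / p b) ^+ 2 * (b == a)%:R)); last first.
  by move=> b _; rewrite addrK eq_sym; case: (b == a); rewrite ?mulr1 ?mulr0 ?expr2 ?mulr0.
rewrite sum_mul_indicator.
have [->|pa_neq0] := eqVneq (p a) 0; first by rewrite !mul0r sqr_ge0.
have -> : p a * (p a * ((yt a - M) / p a) ^+ 2) = (M - yt a) ^+ 2 by field.
have [m_le M_ge] := (yt_ge a, yt_le a).
by rewrite ler_sqr ?nnegrE ?subr_ge0 ?lerD2l ?lerN2 // (le_trans m_le M_ge).
Qed.

End OneRound.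

End AdaHedgeRound.

Section Expectation.
Variables (R : realType) (K : nat) (M m : R) (y : nat -> 'I_K -> R).
Hypotheses (HK : (1 < K)%N) (y_le : forall t b, y t b <= M) (y_ge : forall t b, m <= y t b).

Fixpoint Ex (n t : nat) (st : state R K) (g : state R K -> R) : R :=
  if n is n'.+1 then \sum_a prob st a * Ex n' t.+1 (step M (y t) st a) g else g st.

Lemma step_gap_ge0 t (st : state R K) a : 0 <= st.2 -> 0 <= (step M (y t) st a).2.
Proof. by move=> D_ge0; rewrite addr_ge0 // delta_ge0. Qed.

Lemma Ex_le n t st g1 g2 : (forall s, 0 <= s.2 -> g1 s <= g2 s) -> 0 <= st.2 ->
  Ex n t st g1 <= Ex n t st g2.
Proof.
move=> g12; elim: n t st => [|n IH] t st D_ge0 /=; first exact: g12.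
by apply: ler_sum => a _; rewrite ler_wpM2l ?prob_ge0 // IH // step_gap_ge0.
Qed.

Lemma Ex_cst n t st c : Ex n t st (fun=> c) = c.
Proof.
elim: n t st => [|n IH] t st //=; under eq_bigr do rewrite IH.
by rewrite -mulr_suml prob_sum1 // mul1r.
Qed.

Lemma Ex_lin n t st (k : R) g1 g2 :
  Ex n t st (fun s => k * g1 s + g2 s) = k * Ex n t st g1 + Ex n t st g2.
Proof.
elim: n t st => [|n IH] t st //=; under eq_bigr do rewrite IH mulrDr mulrCA.
by rewrite big_split -mulr_sumr.
Qed.

Lemma Ex_pot_drift_le n t st : 0 <= st.2 ->
  Ex n t st (fun s => pot HK s - s.2) - (pot HK st - st.2) <= exp_reward M y n t st.
Proof.
elim: n t st => [|n IH] t st D_ge0 /=; first by rewrite subrr.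
rewrite -[X in _ - X]mul1r -(prob_sum1 HK st) mulr_suml -sumrB.
apply: ler_sum => a _; rewrite -mulrBr.
have [->|pa_neq0] := eqVneq (prob st a) 0; first by rewrite !mul0r.
rewrite ler_wpM2l ?prob_ge0 //.
have := IH t.+1 _ (step_gap_ge0 t a D_ge0); have := pot_step M HK (y t) D_ge0 a.
by rewrite mean_yhat //=; lra.
Qed.

Lemma Ex_estimate_ge n t st c :
  st.1 c + \sum_(i < n) y (t + i)%N c <= Ex n t st (fun s => s.1 c).
Proof.
elim: n t st => [|n IH] t st /=; first by rewrite big_ord0 addr0.
apply: le_trans (ler_sum _ (fun a _ => ler_wpM2l (prob_ge0 HK st a) (IH t.+1 _))).
rewrite big_ord_recl addn0 /=.
rewrite (eq_bigr (fun a => prob st a * yhat M (prob st) (y t) a c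
    + prob st a * (st.1 c + \sum_(i < n) y (t.+1 + i)%N c))); last by move=> a _; ring.
rewrite big_split /= -mulr_suml prob_sum1 // mul1r.
have -> : \sum_(i < n) y (t + bump 0 i)%N c = \sum_(i < n) y (t.+1 + i)%N c.
  by apply: eq_bigr => i _; rewrite addSnnS.
by have := yt_le_mean_yhat HK st (y_le t) c; lra.
Qed.

Lemma Ex_gap_sq_le n t st : 0 <= st.2 ->
  Ex n t st (fun s => (s.2 - (M - m) / 2) ^+ 2) <=
  (st.2 - (M - m) / 2) ^+ 2 + n%:R * (ln K%:R * (K%:R * (M - m) ^+ 2)).
Proof.
elim: n t st => [|n IH] t st D_ge0 /=; first by rewrite mul0r addr0.
set C := ln K%:R * _.
apply: (@le_trans _ _ (\sum_a prob st a * ((st.2 - (M - m) / 2) ^+ 2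
    + ln K%:R * \sum_b prob st b * (yhat M (prob st) (y t) a b - M) ^+ 2 + n%:R * C))).
  apply: ler_sum => a _; have [->|pa_neq0] := eqVneq (prob st a) 0; first by rewrite !mul0r.
  rewrite ler_wpM2l ?prob_ge0 //; apply: le_trans (IH t.+1 _ (step_gap_ge0 t a D_ge0)) _.
  by rewrite lerD2r; exact (gap_sq_step HK D_ge0 (y_le t) (y_ge t) pa_neq0).
under eq_bigr do rewrite mulrDr [X in X + _]mulrDr.
rewrite !big_split /= -!mulr_suml prob_sum1 // !mul1r -addrA lerD2l.
rewrite -nat1r mulrDl mul1r lerD2r.
under eq_bigr do rewrite mulrCA.
rewrite -mulr_sumr ler_wpM2l ?(ltW (lnK_gt0 _ HK)) //.
exact: sum_prob_var_le (y_le t) (y_ge t).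
Qed.

End Expectation.

Lemma maxlist_le (R : realType) (s : seq R) x :
  s != [::] -> (forall z, z \in s -> z <= x) -> maxlist s <= x.
Proof.
case: s => [//|z s] _ s_le; rewrite /maxlist big_seq.
by apply: bigmax_le => [|w /s_le //]; apply: s_le; exact: mem_head.
Qed.

Section RegretBound.
Variables (R : realType) (K : nat) (M m : R) (y : nat -> 'I_K -> R).
Hypotheses (HK : (1 < K)%N) (mM : m <= M).
Hypotheses (y_le : forall t b, y t b <= M) (y_ge : forall t b, m <= y t b).

Local Notation Ex_gap T := (Ex M y T 0 (init_state R K) (fun s => s.2)).

Lemma cum_reward_le T c :
  \sum_(t < T) y t c <= exp_reward M y T 0 (init_state R K) + 2 * Ex_gap T.
Proof.
have est := Ex_estimate_ge HK y_le T 0 (init_state R K) c.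
have drift := @Ex_pot_drift_le _ _ M y HK T 0 (init_state R K) (lexx 0).
have pot_ge_Ex : Ex M y T 0 (init_state R K) (fun s => -2 * s.2 + s.1 c) <=
    Ex M y T 0 (init_state R K) (fun s => pot HK s - s.2).
  by apply: (Ex_le M y HK) => // s D_ge0; have := pot_ge HK c D_ge0; lra.
rewrite Ex_lin in pot_ge_Ex; rewrite pot_init /= subrr subr0 in drift.
move: est; rewrite /= add0r; under eq_bigr do rewrite add0n.
lra.
Qed.

Lemma Ex_gap_le T :
  Ex_gap T <= (M - m) * Num.sqrt (K%:R * T%:R * ln K%:R) + (M - m).
Proof.
set B := M - m; set sq := Num.sqrt _; set a := B * sq + B / 2.
have B_ge0 : 0 <= B by rewrite subr_ge0.
have sq_ge0 : 0 <= sq := sqrtr_ge0 _.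
have a_ge0 : 0 <= a by rewrite addr_ge0 ?mulr_ge0 ?divr_ge0.
have Ex_sq_le : Ex M y T 0 (init_state R K) (fun s => (s.2 - B / 2) ^+ 2) <= a ^+ 2.
  apply: le_trans (@Ex_gap_sq_le _ _ _ _ _ HK y_le y_ge T 0 (init_state R K) (lexx 0)) _.
  rewrite /= sub0r sqrrN -/B.
  have : a ^+ 2 = B ^+ 2 * sq ^+ 2 + B ^+ 2 * sq + (B / 2) ^+ 2 by rewrite /a; field.
  rewrite sqr_sqrtr ?mulr_ge0 ?(ltW (lnK_gt0 _ HK)) // => ->.
  have : T%:R * (ln K%:R * (K%:R * B ^+ 2)) = B ^+ 2 * (K%:R * T%:R * ln K%:R) by ring.
  have : 0 <= B ^+ 2 * sq by rewrite mulr_ge0 ?sqr_ge0.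
  lra.
suff : Ex_gap T - B / 2 <= a by rewrite /a; lra.
apply: (le_inf_amgm a_ge0) => c c_gt0.
have amgm : Ex_gap T <=
    Ex M y T 0 (init_state R K) (fun s => (2 * c)^-1 * (s.2 - B / 2) ^+ 2 + (B / 2 + c / 2)).
  apply: (Ex_le M y HK) => // s _; have := le_amgm (s.2 - B / 2) c_gt0; lra.
rewrite Ex_lin Ex_cst // in amgm.
have : (2 * c)^-1 * Ex M y T 0 (init_state R K) (fun s => (s.2 - B / 2) ^+ 2)
    <= (2 * c)^-1 * a ^+ 2 by rewrite ler_wpM2l // invr_ge0 mulr_ge0 // ltW.
lra.
Qed.

End RegretBound.

Unset Implicit Arguments.
Set Strict Implicit.

Theorem theorem8 (R : realType) (K : nat) (HK : (2 <= K)%N) (M m : R)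
  (HmM : m <= M) (y : nat -> 'I_K -> R)
  (Hy : forall t a, m <= y t a <= M) (T : nat) (HT : (1 <= T)%N) :
  regret M y T <=
  2 * (M - m) * Num.sqrt (K%:R * T%:R * ln K%:R) + 2 * (M - m).
Proof.
have y_le t b : y t b <= M by case/andP: (Hy t b).
have y_ge t b : m <= y t b by case/andP: (Hy t b).
rewrite /regret lerBlDr; apply: maxlist_le.
  by rewrite -size_eq0 size_map size_enum_ord -lt0n ltnW.
move=> _ /mapP[c _ ->]; apply: le_trans (cum_reward_le HK y_le T c) _.
by have := Ex_gap_le HK HmM y_le y_ge T; lra.
Qed.
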